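(* Let $G=(V,E)$ be a finite undirected graph that is triangle-full and 4-clique-free. For $v\in V$ let $N[v]=\{v\}\cup\{v'\in V:\{v,v'\}\in E\}$, let $L_v=(V^*vv)^\omega\cup(V^*(V\setminus N[v]))^\omega\subseteq V^\omega$, and $L_G=\bigcap_{v\in V}L_v$. If there exists a (possibly non-deterministic) complete generalised Büchi automaton over the input alphabet $V$ with three states recognising $L_G$, then $G$ is 3-colourable.
   Context: A finite undirected graph is $G=(V,E)$ with $V$ finite and $E$ a set of 2-element subsets of $V$. A $k$-clique is a set of $k$ pairwise adjacent vertices; $G$ is triangle-full if every vertex lies in a 3-clique, and 4-clique-free if it has no 4-clique. A 3-colouring is a map $c:V\to\{1,2,3\}$ with $c(v)\ne c(v')$ whenever $\{v,v'\}\in E$. For sets $X,Y$ of letters, $(X^*Y)^\omega$ denotes infinite concatenations of words from $X^*Y$. An automaton is a tuple $(Q,\Sigma,q_{\mathrm{init}},\Delta,\Gamma,\mathrm{col},W)$ with finite state set, finite input alphabet $\Sigma$, initial state, transitions $\Delta\subseteq Q\times\Sigma\times Q$, output alphabet $\Gamma$, labelling $\mathrm{col}:\Delta\to\Gamma$, acceptance condition $W\subseteq\Gamma^\omega$. A run on $w=a_1a_2\cdots$ is a sequence $(q_0,a_1,q_1)(q_1,a_2,q_2)\cdots$ of transitions with $q_0=q_{\mathrm{init}}$, accepting if its label sequence is in $W$; the recognised language is the set of words with an accepting run. A generalised Büchi automaton with finite output colour set $C$ has $\Gamma=2^C$ and $W=\{x : \text{every } c\in C \text{ occurs in infinitely many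 letters of } x\}$. Complete: for every $(p,a)\in Q\times\Sigma$ there is at least one $q$ with $(p,a,q)\in\Delta$. *)

From mathcomp Require Import all_boot.
Set Implicit Arguments. Unset Strict Implicit. Unset Printing Implicit Defensive.

Definition simple_graph (V : finType) (e : rel V) : Prop :=
  symmetric e /\ irreflexive e.

Definition is_clique (V : finType) (e : rel V) (S : {set V}) : Prop :=
  {in S &, forall x y, x != y -> e x y}.

Definition triangle_full (V : finType) (e : rel V) : Prop :=
  forall v : V, exists S : {set V}, [/\ #|S| = 3, is_clique e S & v \in S].

Definition four_clique_free (V : finType) (e : rel V) : Prop :=
  forall S : {set V}, #|S| = 4 -> ~ is_clique e S.

Definition three_colourable (V : finType) (e : rel V) : Prop :=
  exists c : V -> 'I_3, forall x y, e x y -> c x != c y.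

Definition closed_nbhd (V : finType) (e : rel V) (v : V) : pred V :=
  fun x => (x == v) || e v x.

(* finite words are seq V, infinite words are nat -> V (letters a_1 a_2 ... as w 0, w 1, ...) *)
Definition segment (V : Type) (w : nat -> V) (a b : nat) : seq V :=
  [seq w i | i <- iota a (b - a)].

(* X^* Y with X = V (all letters): words of the form p ++ y with y in Y *)
Definition allstar_cat (V : Type) (Y : seq V -> Prop) (s : seq V) : Prop :=
  exists p y, s = p ++ y /\ Y y.

(* omega-power: w is an infinite concatenation of nonempty words from P *)
Definition omega_pow (V : Type) (P : seq V -> Prop) (w : nat -> V) : Prop :=
  exists f : nat -> nat, [/\ f 0 = 0, (forall k, f k < f k.+1)
                            & forall k, P (segment w (f k) (f k.+1))].

Definition L_v (V : finType) (e : rel V) (v : V) (w : nat -> V) : Prop :=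
  omega_pow (allstar_cat (fun y => y = [:: v; v])) w \/
  omega_pow (allstar_cat (fun y => exists x, y = [:: x] /\ ~~ closed_nbhd e v x)) w.

Definition L_G (V : finType) (e : rel V) (w : nat -> V) : Prop :=
  forall v : V, L_v e v w.

(* Generalised Buchi automaton with states Q, alphabet V, colour set C;
   transitions delta, labelling col : transition -> {set C} (given on all triples,
   only its values on transitions matter). *)
Record gba (Q V C : finType) := GBA {
  q_init : Q;
  delta : Q -> V -> Q -> bool;
  col : Q -> V -> Q -> {set C} }.

Definition gba_complete (Q V C : finType) (A : gba Q V C) : Prop :=
  forall (p : Q) (a : V), exists q : Q, delta A p a q.

Definition is_run (Q V C : finType) (A : gba Q V C) (w : nat -> V) (r : nat -> Q) : Prop :=
  r 0 = q_init A /\ forall i, delta A (r i) (w i) (r i.+1).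

Definition run_accepting (Q V C : finType) (A : gba Q V C) (w : nat -> V) (r : nat -> Q) : Prop :=
  forall c : C, forall N, exists i, N <= i /\ c \in col A (r i) (w i) (r i.+1).

Definition gba_accepts (Q V C : finType) (A : gba Q V C) (w : nat -> V) : Prop :=
  exists r, is_run A w r /\ run_accepting A w r.

Definition recognises (Q V C : finType) (A : gba Q V C) (L : (nat -> V) -> Prop) : Prop :=
  forall w, gba_accepts A w <-> L w.

(* Call a state m breakable for a vertex x if the automaton can loop on m
   reading a word over N[x] without factor x x that neither starts nor ends with
   x.  Splicing such loops into an accepting run kills every factor x x while
   staying in N[x]^omega and keeping the run accepting, which L_x forbids.  On the
   word (x x a a b b)^omega for a triangle x a b this yields an anchor of x: a
   non-breakable state entered and left by reading x and reachable again over
   N[x].  With three states, a case analysis shows that adjacent vertices lying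
   in triangles never share an anchor, so anchors form a proper 3-colouring. *)

From Stdlib Require Import Classical.
From mathcomp Require Import all_boot zify.
Set Implicit Arguments. Unset Strict Implicit. Unset Printing Implicit Defensive.

Section Segments.
Variable T : Type.
Implicit Types (w : nat -> T) (a b c k n : nat).

Lemma segment_drop w a b k : drop k (segment w a b) = segment w (a + k) b.
Proof. by rewrite /segment -map_drop drop_iota subnDA. Qed.

Lemma segment_cat w a c b : a <= c <= b ->
  segment w a b = segment w a c ++ segment w c b.
Proof.
move=> /andP[ac cb]; rewrite /segment -map_cat.
have -> : b - a = (c - a) + (b - c) by lia.
by rewrite iotaD subnKC.
Qed.

Lemma segment_periodic w n a b k : (forall i, w (i + n) = w i) ->
  segment w (a + k * n) (b + k * n) = segment w a b.
Proof.
move=> wn; have wkn i : w (i + k * n) = w i.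
  elim: k => [|k IHk]; first by rewrite mul0n addn0.
  by rewrite mulSn addnCA addnC wn.
rewrite /segment subnDr addnC iotaDl -map_comp; apply: eq_map => i /=.
by rewrite addnC wkn.
Qed.

Lemma periodic_omega_pow (Y : seq T -> Prop) w n j l : 0 < l <= n ->
  (forall i, w (i + n) = w i) -> Y (segment w j (j + l)) -> omega_pow (allstar_cat Y) w.
Proof.
move=> /andP[l_gt0 ln] wn Yj.
exists (fun k => if k is k'.+1 then j + l + k' * n else 0); split=> // [k|k].
  by case: k => [|k]; rewrite ?mulSn; lia.
exists (segment w (if k is k'.+1 then j + l + k' * n else 0) (j + k * n)).
exists (segment w (j + k * n) (j + l + k * n)); split; last by rewrite segment_periodic.
by apply: segment_cat; case: k => [|k]; rewrite ?mulSn; lia.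
Qed.

End Segments.

Lemma incr_geq (f : nat -> nat) : (forall k, f k < f k.+1) -> forall k, k <= f k.
Proof. by move=> f_incr; elim=> // k IHk; apply: leq_ltn_trans IHk (f_incr k). Qed.

Lemma not_L_v (V : finType) (e : rel V) v w N : (forall i, closed_nbhd e v (w i)) ->
  (forall i, N <= i -> (w i != v) || (w i.+1 != v)) -> ~ L_v e v w.
Proof.
move=> w_nbhd no_vv [[f [_ f_incr segf]] | [f [_ _ segf]]].
- have [p [y [Eseg Ey]]] := segf N; subst y.
  have Evv : segment w (f N + size p) (f N.+1) = [:: v; v].
    by rewrite -segment_drop Eseg drop_size_cat.
  have len2 : f N.+1 - (f N + size p) = 2.
    by have := congr1 size Evv; rewrite size_map size_iota.
  move: Evv; rewrite /segment len2 /= => -[wv wv1].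
  have Nc : N <= f N + size p := leq_trans (incr_geq f_incr N) (leq_addr _ _).
  by move: (no_vv _ Nc); rewrite wv wv1 eqxx.
- have [p [y [Eseg [x [Ey nx]]]]] := segf 0; subst y.
  have : x \in segment w (f 0) (f 1) by rewrite Eseg mem_cat mem_head orbT.
  by case/mapP=> i _ wi; rewrite wi w_nbhd in nx.
Qed.

Definition triangle_word (V : Type) (x a b : V) (i : nat) : V :=
  nth x [:: x; x; a; a; b; b] (i %% 6).

Lemma triangle_word_periodic (V : Type) (x a b : V) i :
  triangle_word x a b (i + 6) = triangle_word x a b i.
Proof. by rewrite /triangle_word modnDr. Qed.

Lemma triangle_word_L_G (V : finType) (e : rel V) x a b :
  simple_graph e -> four_clique_free e -> e x a -> e x b -> e a b ->
  L_G e (triangle_word x a b).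
Proof.
move=> [e_sym e_irr] no_K4 exa exb eab v; set w := triangle_word x a b.
have twice j : w j = v -> w j.+1 = v -> L_v e v w.
  move=> wj wj1; left; apply: (@periodic_omega_pow _ _ _ 6 j 2) => //.
    exact: triangle_word_periodic.
  by rewrite /segment addKn /= wj wj1.
have missing j : ~~ closed_nbhd e v (w j) -> L_v e v w.
  move=> nj; right; apply: (@periodic_omega_pow _ _ _ 6 j 1) => //.
    exact: triangle_word_periodic.
  by rewrite /segment addKn; exists (w j).
have [vx | vx] := eqVneq v x; first by apply: (twice 0); rewrite vx.
have [va | va] := eqVneq v a; first by apply: (twice 2); rewrite va.
have [vb | vb] := eqVneq v b; first by apply: (twice 4); rewrite vb.
rewrite /closed_nbhd in missing.
have [evx | nx] := boolP (e v x); last by apply: (missing 0); rewrite /= eq_sym (negbTE vx).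
have [eva | na] := boolP (e v a); last by apply: (missing 2); rewrite /= eq_sym (negbTE va).
have [evb | nb] := boolP (e v b); last by apply: (missing 4); rewrite /= eq_sym (negbTE vb).
have neq y z : e y z -> y != z by apply: contraTneq => ->; rewrite e_irr.
exfalso; apply: (no_K4 (v |: (x |: (a |: [set b])))).
  rewrite !cardsU1 cards1 !inE !negb_or vx va vb !neq //.
move=> y z; rewrite !inE => /or4P[]/eqP-> /or4P[]/eqP->; rewrite ?eqxx // => _;
  by rewrite // e_sym.
Qed.

(* After the prefix of length [L0], block [k] of the spliced sequence is [g k]
   (of length [Lm]) followed by the [k]-th window [f (L0 + k * P + _)] of length [P]. *)
Definition spliced (T : Type) (L0 P Lm : nat) (f : nat -> T) (g : nat -> nat -> T)
    (i : nat) : T :=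
  if i < L0 then f i else
  let k := (i - L0) %/ (Lm + P) in let o := (i - L0) %% (Lm + P) in
  if o < Lm then g k o else f (L0 + k * P + (o - Lm)).

Section Splice.
Context {T : Type} {L0 P Lm : nat} {f : nat -> T} {g : nat -> nat -> T}.
Local Notation spliced := (spliced L0 P Lm f g).

Lemma spliced_prefix i : i < L0 -> spliced i = f i.
Proof. by rewrite /spliced => ->. Qed.

Lemma spliced_block k o : o < Lm + P ->
  spliced (L0 + k * (Lm + P) + o) = if o < Lm then g k o else f (L0 + k * P + (o - Lm)).
Proof.
move=> o_lt; rewrite /spliced ltnNge -addnA leq_addr /= addKn.
by rewrite divnMDl ?divn_small ?addn0 ?modnMDl ?modn_small //; lia.
Qed.

Lemma spliced_index i : 0 < Lm + P -> L0 <= i ->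
  exists k o, o < Lm + P /\ i = L0 + k * (Lm + P) + o.
Proof.
move=> n_gt0 L0i; exists ((i - L0) %/ (Lm + P)), ((i - L0) %% (Lm + P)).
by rewrite ltn_pmod // -addnA -divn_eq subnKC.
Qed.

Lemma spliced_index_succ k o : o < Lm + P ->
  (L0 + k * (Lm + P) + o).+1 =
  if o.+1 < Lm + P then L0 + k * (Lm + P) + o.+1 else L0 + k.+1 * (Lm + P) + 0.
Proof. by move=> o_lt; case: ifP; rewrite ?mulSn; lia. Qed.

Lemma spliced_all (p : pred T) :
  (forall i, p (f i)) -> (forall k o, o < Lm -> p (g k o)) -> forall i, p (spliced i).
Proof. by move=> pf pg i; rewrite /spliced; case: ifP => // _; case: ifP => [/pg|]. Qed.

Lemma spliced_rel (R : rel T) : 0 < Lm -> 0 < P ->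
  (forall k o, o.+1 < Lm -> R (g k o) (g k o.+1)) ->
  (forall k, R (g k Lm.-1) (f (L0 + k * P))) ->
  (forall k t, t.+1 < P -> R (f (L0 + k * P + t)) (f (L0 + k * P + t.+1))) ->
  (forall k, R (f (L0 + k * P + P.-1)) (g k.+1 0)) ->
  forall i, L0 <= i -> R (spliced i) (spliced i.+1).
Proof.
move=> Lm_gt0 P_gt0 Rg Rgf Rf Rfg i.
case/spliced_index=> [|k [o [o_lt ->]]]; first by rewrite addn_gt0 Lm_gt0.
rewrite spliced_index_succ //; case: ifP => o1_lt.
all: rewrite !spliced_block ?addn_gt0 ?Lm_gt0 //=.
- case: ltnP => o_Lm; case: ltnP => o1_Lm.
  + exact: Rg.
  + have -> : o.+1 - Lm = 0 by lia.
    have -> : o = Lm.-1 by lia.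
    by rewrite addn0; apply: Rgf.
  + lia.
  + by rewrite subSn //; apply: Rf; lia.
- rewrite ifN; last by lia.
  have -> : o - Lm = P.-1 by lia.
  exact: Rfg.
Qed.

End Splice.

Section SplicedRun.
Variables (Q V C : finType) (A : gba Q V C) (w : nat -> V) (r : nat -> Q).
Variables (L0 P Lm : nat) (ys : nat -> nat -> V) (ss : nat -> nat -> Q).
Hypothesis P_gt0 : 0 < P.
Hypothesis loop_delta : forall k o, o < Lm -> delta A (ss k o) (ys k o) (ss k o.+1).
Hypothesis loop_start : forall k, ss k 0 = r (L0 + k * P).
Hypothesis loop_end : forall k, ss k Lm = r (L0 + k * P).

Local Notation w' := (spliced L0 P Lm w ys).
Local Notation r' := (spliced L0 P Lm r ss).

Lemma spliced_run_loop k o : o <= Lm -> r' (L0 + k * (Lm + P) + o) = ss k o.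
Proof.
move=> o_le; rewrite spliced_block; last by lia.
case: ltnP => // Lm_o; have -> : o = Lm by lia.
by rewrite subnn addn0 loop_end.
Qed.

Lemma spliced_run_window k o : Lm <= o <= Lm + P ->
  r' (L0 + k * (Lm + P) + o) = r (L0 + k * P + (o - Lm)).
Proof.
case/andP=> Lm_o; rewrite leq_eqVlt => /orP[/eqP-> | o_lt].
  have -> : L0 + k * (Lm + P) + (Lm + P) = L0 + k.+1 * (Lm + P) + 0 by rewrite mulSn; lia.
  rewrite spliced_run_loop // loop_start; congr r; rewrite mulSn; lia.
by rewrite spliced_block // ltnNge Lm_o.
Qed.

Lemma spliced_run_prefix i : i <= L0 -> r' i = r i.
Proof.
rewrite leq_eqVlt => /orP[/eqP-> | /spliced_prefix //].
have := spliced_run_loop 0 (leq0n Lm); rewrite mul0n !addn0 => ->.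
by rewrite loop_start mul0n addn0.
Qed.

Lemma is_run_spliced : is_run A w r -> is_run A w' r'.
Proof.
case=> r0 r_delta; split; first by rewrite spliced_run_prefix.
move=> i; have [i_lt | L0i] := ltnP i L0.
  by rewrite !spliced_run_prefix ?(ltnW i_lt) // (spliced_prefix i_lt).
have [|k [o [o_lt ->]]] := spliced_index (_ : 0 < Lm + P) L0i; first by lia.
rewrite -addnS [w' _]spliced_block //; case: ltnP => [o_Lm | Lm_o].
  by rewrite !spliced_run_loop ?(ltnW o_Lm) ?loop_delta.
rewrite !spliced_run_window ?Lm_o ?(leqW Lm_o) ?(ltnW o_lt) // subSn // addnS.
exact: r_delta.
Qed.

Lemma run_accepting_spliced : run_accepting A w r -> run_accepting A w' r'.
Proof.
move=> acc c N; have [j [Nj cj]] := acc c (maxn N L0).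
have [k [t [t_lt Ej]]] : exists k t, t < P /\ j = L0 + k * P + t.
  exists ((j - L0) %/ P), ((j - L0) %% P).
  by rewrite ltn_pmod // -addnA -divn_eq subnKC //; lia.
exists (L0 + k * (Lm + P) + (Lm + t)); split; first by rewrite mulnDr; lia.
rewrite -addnS [w' _]spliced_block ?ltnNge ?leq_addr /=; last by lia.
rewrite !spliced_run_window; try by lia.
by rewrite -addnS !addKn addnS -Ej.
Qed.

End SplicedRun.

Lemma connect_fixed (T : finType) (R : rel T) q s :
  (forall s', R q s' -> s' = q) -> connect R q s -> s = q.
Proof.
move=> fixq /connectP[p + ->].
by elim: p => //= a p IHp /andP[/fixq -> /IHp].
Qed.

Section Anchor.
Variables (V Q : finType) (e : rel V) (d : Q -> V -> Q -> bool).

(* Transitions of the automaton on pairs (last letter read, state), restricted to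
   letters of N[x] and never reading x twice in a row. *)
Definition nxx_step (x : V) : rel (V * Q) := fun a b =>
  [&& d a.2 b.1 b.2, closed_nbhd e x b.1 & (a.1 != x) || (b.1 != x)].

(* Starting from (x, m) forces the loop to begin with a letter other than x. *)
Definition breakable (x : V) (m : Q) : bool :=
  [exists y, (y != x) && connect (nxx_step x) (x, m) (y, m)].

Definition nbhd_step (x : V) : rel Q := fun p q => [exists y, closed_nbhd e x y && d p y q].

Definition anchor_by (x : V) (p m p' : Q) : bool :=
  [&& ~~ breakable x m, d p x m, d m x p' & connect (nbhd_step x) p' m].

Definition anchor (x : V) (m : Q) : bool := [exists p, exists p', anchor_by x p m p'].

Definition break_loop (x : V) (m : Q) (s : seq (V * Q)) : bool :=
  [&& path (nxx_step x) (x, m) s, (last (x, m) s).1 != x & (last (x, m) s).2 == m].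

Lemma break_loop_cat x m s1 s2 :
  break_loop x m s1 -> break_loop x m s2 -> break_loop x m (s1 ++ s2).
Proof.
case/and3P=> p1 l1 /eqP m1 /and3P[]; case: s2 => [|b s2]; first by rewrite eqxx.
rewrite /break_loop cat_path last_cat p1 /= => /andP[step p2] l2 m2.
rewrite p2 l2 m2 andbT; case: (last _ s1) l1 m1 => y _ /= yx ->.
by move: step; rewrite /nxx_step /= yx => /and3P[-> ->].
Qed.

Lemma break_loop_repeat x m s n :
  break_loop x m s -> break_loop x m (flatten (nseq n.+1 s)).
Proof.
move=> ls; elim: n => [|n IHn]; first by rewrite /= cats0.
exact: break_loop_cat.
Qed.

(* Every loop can be shortened below [#|V * Q|] and then repeated, so all loops
   may be taken of the same length [#|V * Q|`!]. *)
Lemma breakable_loop x m :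
  breakable x m -> exists s, break_loop x m s && (size s == #|{: V * Q}|`!).
Proof.
case/existsP=> y /andP[yx /connectP[p /shortenP[s ps us _] Es]].
have ls : break_loop x m s by rewrite /break_loop ps -Es yx eqxx.
have s_gt0 : 0 < size s.
  by case: s Es {ps us ls} => // /(congr1 fst) /= yx'; rewrite yx' eqxx in yx.
have s_le : size s <= #|{: V * Q}|.
  by have := max_card (mem ((x, m) :: s)); rewrite (card_uniqP us) /= => /ltnW.
have s_dvd : size s %| #|{: V * Q}|`! by rewrite dvdn_fact // s_gt0.
have : 0 < #|{: V * Q}|`! %/ size s by rewrite divn_gt0 // dvdn_leq ?fact_gt0.
case Ec : (_ %/ size s) => [|c] // _; exists (flatten (nseq c.+1 s)).
by rewrite break_loop_repeat // size_flatten /shape map_nseq sumn_nseq -Ec mulnC divnK ?eqxx.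
Qed.

Hypothesis e_sym : symmetric e.
Hypothesis e_irr : irreflexive e.
Hypothesis d_complete : forall p a, exists q, d p a q.
Hypothesis card_Q : #|Q| <= 3.

Lemma card3_third (a b c z : Q) : a != b -> c != a -> c != b -> z != a -> z != b -> z = c.
Proof.
move=> ab /negbTE ca /negbTE cb za zb; apply/eqP; apply: contraTT card_Q => zc.
rewrite -ltnNge; apply: leq_trans (max_card (z |: (a |: (b |: [set c])))) => /=.
by rewrite !cardsU1 cards1 !inE !negb_or za zb zc ab eq_sym ca eq_sym cb.
Qed.

Lemma edge_neq x y : e x y -> y != x.
Proof. by apply: contraTneq => ->; rewrite e_irr. Qed.

Lemma nxx_step_nbr x (a : V * Q) y s : e x y -> d a.2 y s -> nxx_step x a (y, s).
Proof. by move=> exy das; rewrite /nxx_step /= das /closed_nbhd exy (edge_neq exy) !orbT. Qed.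

Lemma nxx_step_self x (a : V * Q) s : a.1 != x -> d a.2 x s -> nxx_step x a (x, s).
Proof. by move=> ax das; rewrite /nxx_step /closed_nbhd das eqxx ax. Qed.

Lemma loop_breakable x y m : e x y -> d m y m -> breakable x m.
Proof.
move=> exy dm; apply/existsP; exists y; rewrite edge_neq //=.
exact/connect1/nxx_step_nbr.
Qed.

(* Reading [v] from [t] is a step from (u, t), so reaching (y, t) with [y != u]
   would make [t] breakable; reaching [q] is as bad since [q] reads [v] into [t]. *)
Lemma anchor_nbr_reach u v t q q' : e u v -> ~~ breakable u t -> d q v t -> d t v q' ->
  [/\ q != t, q' != t, q' != q &
      forall y s, connect (nxx_step u) (v, q') (y, s) -> s != q /\ (y != u -> s = q')].
Proof.
move=> euv nbt dq dt.
have vu : v != u := edge_neq euv.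
have start : nxx_step u (u, t) (v, q') by apply: nxx_step_nbr.
have not_t y : y != u -> ~~ connect (nxx_step u) (v, q') (y, t).
  move=> yu; apply: contra nbt => R; apply/existsP; exists y.
  by rewrite yu (connect_trans (connect1 start) R).
have not_q y : ~~ connect (nxx_step u) (v, q') (y, q).
  apply: contraNN (not_t v vu) => R.
  by rewrite (connect_trans R) // connect1 // nxx_step_nbr.
have qq' : q' != q by apply: contraNneq (not_q v) => ->; apply: connect0.
have q't : q' != t by apply: contraNneq (not_t v vu) => <-; apply: connect0.
have qt : q != t by apply: contraNneq nbt => qt; apply: (loop_breakable euv); rewrite -{1}qt.
split=> // y s R; split; first by apply: contraNneq (not_q y) => <-.
move=> yu; apply: (card3_third qt qq' q't).
- by apply: contraNneq (not_q y) => <-.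
- by apply: contraNneq (not_t y yu) => <-.
Qed.

Lemma anchor_not_breakable x m : anchor x m -> ~~ breakable x m.
Proof. by case/existsP=> p /existsP[p' /and4P[]]. Qed.

Lemma shared_anchor_pred_neq u v p t p' q' :
  e u v -> anchor_by u p t p' -> anchor_by v p t q' -> False.
Proof.
move=> euv /and4P[nbu dpu dtu rp] /and4P[nbv dpv dtv _].
have evu : e v u by rewrite e_sym.
have [pt p't p'p Rv] := anchor_nbr_reach evu nbv dpu dtu.
have [_ q't q'p Ru] := anchor_nbr_reach euv nbu dpv dtv.
have p'q' : p' = q' by apply: (card3_third pt q'p q't).
have stuck s : nbhd_step u q' s -> s = q'.
  case/existsP=> y /andP[]; rewrite /closed_nbhd; case: eqVneq => [-> _|yu /= euy] dys.
  - have R : connect (nxx_step v) (u, p') (u, s) by rewrite connect1 // nxx_step_nbr ?p'q'.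
    by have [_ /(_ (edge_neq evu))] := Rv u s R; rewrite p'q'.
  - by have [_ ->] := Ru y s (connect1 (nxx_step_nbr (a := (v, q')) euy dys)).
by move: q't; rewrite p'q' in rp; rewrite -(connect_fixed stuck rp) eqxx.
Qed.

(* With three states, the predecessor of a shared anchor for [u] must be its
   successor for [v], and conversely. *)
Lemma shared_anchor u v t : e u v -> anchor u t -> anchor v t ->
  exists p q, [/\ p != q, p != t,
    forall y s, e u y -> d t y s -> s = p,
    forall y s, e v y -> d t y s -> s = q &
    forall y s, e u y -> d p y s -> s = p].
Proof.
move=> euv /existsP[p /existsP[p' Au]] /existsP[q /existsP[q' Av]].
have pq : p != q.
  by apply: contraTneq Av => <-; apply/negP; apply: shared_anchor_pred_neq euv Au.
case/and4P: Au Av => nbu dpu dtu _ /and4P[nbv dqv dtv _].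
have evu : e v u by rewrite e_sym.
have [pt p't p'p Rv] := anchor_nbr_reach evu nbv dpu dtu.
have [qt q't q'q Ru] := anchor_nbr_reach euv nbu dqv dtv.
have pq' : p = q' by apply: (card3_third qt q'q q't).
have p'q : p' = q by apply: (card3_third q't _ qt); rewrite // -?pq' // eq_sym.
subst q' p'.
have tu : connect (nxx_step u) (v, p) (u, t) by rewrite connect1 // nxx_step_self ?edge_neq.
have tv : connect (nxx_step v) (u, q) (v, t) by rewrite connect1 // nxx_step_self ?edge_neq.
exists p, q; split=> // y s eay ds.
- have R := connect_trans tu (connect1 (nxx_step_nbr (a := (u, t)) eay ds)).
  by have [_ ->] := Ru y s R; rewrite ?edge_neq.
- have R := connect_trans tv (connect1 (nxx_step_nbr (a := (v, t)) eay ds)).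
  by have [_ ->] := Rv y s R; rewrite ?edge_neq.
- by have [_ ->] := Ru y s (connect1 (nxx_step_nbr (a := (v, p)) eay ds)); rewrite ?edge_neq.
Qed.

Lemma shared_anchor_no_common_nbr u v w t :
  e u v -> e u w -> e v w -> anchor u t -> anchor v t -> False.
Proof.
move=> euv euw evw Au Av; have [p [q [pq _ tu tv _]]] := shared_anchor euv Au Av.
have [s dts] := d_complete t w.
by move: pq; rewrite -(tu _ _ euw dts) -(tv _ _ evw dts) eqxx.
Qed.

Lemma anchor_edge_neq u v a b tu tv : (forall x, exists m, anchor x m) ->
  e u a -> e u b -> e a b -> e u v -> anchor u tu -> anchor v tv -> tu != tv.
Proof.
move=> anchors eua eub eab euv Au Av; apply/eqP=> tuv; rewrite -tuv in Av.
have [p [_ [_ pt _ _ ploop]]] := shared_anchor euv Au Av.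
have loop_at_p y : e u y -> d p y p.
  by move=> euy; have [s dps] := d_complete p y; rewrite -{2}(ploop y s euy dps).
have [za Aa] := anchors a; have [zb Ab] := anchors b.
have eba : e b a by rewrite e_sym.
have zat : za != tu.
  by apply: contraPneq (shared_anchor_no_common_nbr eua eub eab Au) => <-.
have zbt : zb != tu.
  by apply: contraPneq (shared_anchor_no_common_nbr eub eua eba Au) => <-.
have zap : za != p.
  apply: contraTneq (anchor_not_breakable Aa) => ->.
  by rewrite negbK (loop_breakable eab (loop_at_p b eub)).
have zbp : zb != p.
  apply: contraTneq (anchor_not_breakable Ab) => ->.
  by rewrite negbK (loop_breakable eba (loop_at_p a eua)).
have zbza : zb = za by apply: (card3_third pt zap zat).
have eau : e a u by rewrite e_sym.
have ebu : e b u by rewrite e_sym.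
by rewrite zbza in Ab; apply: (shared_anchor_no_common_nbr eab eau ebu Aa Ab).
Qed.

End Anchor.

Lemma breakable_splice (V Q C : finType) (e : rel V) (A : gba Q V C) x w r L0 P :
  0 < P -> is_run A w r -> run_accepting A w r -> (forall i, closed_nbhd e x (w i)) ->
  (forall k t, t.+1 < P -> (w (L0 + k * P + t) != x) || (w (L0 + k * P + t.+1) != x)) ->
  (forall k, breakable e (delta A) x (r (L0 + k * P))) ->
  exists w', [/\ gba_accepts A w', forall i, closed_nbhd e x (w' i) &
                 forall i, L0 <= i -> (w' i != x) || (w' i.+1 != x)].
Proof.
move=> P_gt0 run_r acc_r w_nbhd w_nxx brk.
set N := #|{: V * Q}|`!; pose m k := r (L0 + k * P).
pose s k := xchoose (breakable_loop (brk k)).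
have s_loop k : break_loop e (delta A) x (m k) (s k).
  by case/andP: (xchooseP (breakable_loop (brk k))).
have s_size k : size (s k) = N.
  by case/andP: (xchooseP (breakable_loop (brk k))) => _ /eqP.
pose ys k o := (nth (x, m k) (s k) o).1.
pose ss k o := (nth (x, m k) ((x, m k) :: s k) o).2.
have step k o : o < N ->
    nxx_step e (delta A) x (nth (x, m k) ((x, m k) :: s k) o) (nth (x, m k) (s k) o).
  by move=> o_lt; case/and3P: (s_loop k) => /(pathP (x, m k)) -> //; rewrite s_size.
have loop_end k : ss k N = m k.
  by case/and3P: (s_loop k) => _ _ /eqP <-; rewrite /ss -(s_size k) -last_nth.
have last_letter k : ys k N.-1 != x.
  by case/and3P: (s_loop k); rewrite /ys -(s_size k) nth_last.
have first_letter k : ys k 0 != x.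
  by case/and3P: (step k 0 (fact_gt0 _)); rewrite eqxx.
have loop_delta k o : o < N -> delta A (ss k o) (ys k o) (ss k o.+1).
  by move=> o_lt; case/and3P: (step k o o_lt).
have loop_start k : ss k 0 = m k by [].
exists (spliced L0 P N w ys); split.
- exists (spliced L0 P N r ss); split.
    exact: is_run_spliced P_gt0 loop_delta loop_start loop_end run_r.
  exact: (run_accepting_spliced (ss := ss) ys P_gt0 loop_start loop_end acc_r).
- apply: (spliced_all (p := closed_nbhd e x)) => // k o o_lt.
  by case/and3P: (step k o o_lt).
- apply: (@spliced_rel _ L0 P N w ys (fun a b => (a != x) || (b != x))) => //=.
  + exact: fact_gt0.
  + by move=> k o o_lt; case/and3P: (step k o.+1 o_lt).
  + by move=> k; rewrite last_letter.
  + by move=> k; rewrite first_letter orbT.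
Qed.

Lemma eventually_recurrent (T : finType) (g : nat -> T) :
  exists K, forall k, K <= k -> forall M, exists2 k', M <= k' & g k' = g k.
Proof.
suff [K recK] : exists K, forall k, K <= k -> g k \in enum T ->
    forall M, exists2 k', M <= k' & g k' = g k.
  by exists K => k Kk; apply: recK; rewrite ?mem_enum.
elim: (enum T) => [|y l [K IHl]]; first by exists 0.
have [rec_y | /not_all_ex_not[B noB]] := classic (forall M, exists2 k', M <= k' & g k' = y).
  by exists K => k Kk; rewrite inE => /orP[/eqP-> | /IHl]; [apply: rec_y | apply].
exists (maxn K B) => k; rewrite geq_max => /andP[Kk Bk]; rewrite inE.
by case/orP=> [/eqP gy | /IHl]; [case: noB; exists k | apply].
Qed.

Lemma run_connect_nbhd (V Q C : finType) (e : rel V) (A : gba Q V C) x w r :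
  is_run A w r -> (forall i, closed_nbhd e x (w i)) ->
  forall i j, i <= j -> connect (nbhd_step e (delta A) x) (r i) (r j).
Proof.
case=> _ r_delta w_nbhd i j /subnKC <-; elim: (j - i) => [|n IHn].
  by rewrite addn0 connect0.
apply: connect_trans IHn (connect1 _); apply/existsP; exists (w (i + n)).
by rewrite w_nbhd addnS r_delta.
Qed.

Lemma recurrent_anchor (V Q C : finType) (e : rel V) (A : gba Q V C) x w r i j :
  is_run A w r -> (forall i, closed_nbhd e x (w i)) -> w i = x -> w i.+1 = x ->
  i.+1 < j -> r j = r i.+1 -> ~~ breakable e (delta A) x (r i.+1) ->
  anchor e (delta A) x (r i.+1).
Proof.
move=> run_r w_nbhd wi wi1 ij rj nb; have [_ r_delta] := run_r.
apply/existsP; exists (r i); apply/existsP; exists (r i.+2).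
move: (r_delta i) (r_delta i.+1); rewrite /anchor_by nb wi wi1 => -> -> /=.
by rewrite -rj (run_connect_nbhd run_r w_nbhd).
Qed.

(* On [(x x a a b b)^omega] the states read between two consecutive [x]'s that
   recur are eventually all breakable unless one of them is an anchor; splicing
   would then yield an accepted word outside [L_x]. *)
Lemma anchor_exists (V Q C : finType) (e : rel V) (A : gba Q V C) x a b :
  simple_graph e -> four_clique_free e -> recognises A (L_G e) ->
  e x a -> e x b -> e a b -> exists m, anchor e (delta A) x m.
Proof.
move=> ge no_K4 recA exa exb eab; have [_ e_irr] := ge.
have ax : a != x by apply: contraTneq exa => ->; rewrite e_irr.
have bx : b != x by apply: contraTneq exb => ->; rewrite e_irr.
set w := triangle_word x a b.
have [r [run_r acc_r]] := (recA w).2 (triangle_word_L_G ge no_K4 exa exb eab).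
have w_at j t : w (j * 6 + t) = nth x [:: x; x; a; a; b; b] (t %% 6).
  by rewrite /w /triangle_word modnMDl.
have w_nbhd i : closed_nbhd e x (w i).
  rewrite (divn_eq i 6) w_at /closed_nbhd.
  by case: (i %% 6 %% 6) (ltn_pmod (i %% 6) (isT : 0 < 6)) => [|[|[|[|[|[|?]]]]]] //= _;
     rewrite ?eqxx ?exa ?exb ?orbT.
case: (boolP [exists m, anchor e (delta A) x m]) => [/existsP // | /existsPn no_anchor].
have [K rec] := eventually_recurrent (fun k => r (k * 6).+1).
have brk k : breakable e (delta A) x (r (K * 6 + 1 + k * 6)).
  have -> : K * 6 + 1 + k * 6 = ((K + k) * 6).+1 by rewrite mulnDl; lia.
  have [k' kk' rk'] := rec (K + k) (leq_addr _ _) (K + k).+1.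
  apply: contraNT (no_anchor _) => nb; apply: (recurrent_anchor run_r w_nbhd _ _ _ rk' nb).
  - by rewrite -[_ * 6]addn0 w_at.
  - by rewrite -addn1 w_at.
  - lia.
have [|w' [acc' w'_nbhd w'_nxx]] := breakable_splice (isT : 0 < 6) run_r acc_r w_nbhd _ brk.
  move=> k t t_lt.
  have pos u : K * 6 + 1 + k * 6 + u = (K + k) * 6 + u.+1 by rewrite mulnDl; lia.
  rewrite !pos !w_at.
  by case: t t_lt => [|[|[|[|[|?]]]]] //= _; rewrite ?ax ?bx ?orbT.
by case: (not_L_v w'_nbhd w'_nxx); apply: (recA w').1 acc' x.
Qed.

Lemma triangle_full_nbrs (V : finType) (e : rel V) :
  triangle_full e -> forall x, exists a b, [/\ e x a, e x b & e a b].
Proof.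
move=> tri x; have [S [cardS clS xS]] := tri x.
have /cards2P[a [b [ab Sx]]] : #|S :\ x| == 2.
  by move: cardS; rewrite (cardsD1 x) xS add1n => -[->].
have /setD1P[ax aS] : a \in S :\ x by rewrite Sx !inE eqxx.
have /setD1P[bx bS] : b \in S :\ x by rewrite Sx !inE eqxx orbT.
by exists a, b; split; apply: clS; rewrite // eq_sym.
Qed.

Unset Implicit Arguments.
Theorem lemma45 (V : finType) (e : rel V) :
  simple_graph e -> triangle_full e -> four_clique_free e ->
  (exists (Q C : finType) (A : gba Q V C),
      #|Q| = 3 /\ gba_complete A /\ recognises A (L_G e)) ->
  three_colourable e.
Proof.
move=> ge tri no_K4 [Q [C [A [card_Q [complete recA]]]]]; have [e_sym e_irr] := ge.
have anchors x : exists m, anchor e (delta A) x m.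
  have [a [b [exa exb eab]]] := triangle_full_nbrs tri x.
  exact: anchor_exists ge no_K4 recA exa exb eab.
exists (fun x => cast_ord card_Q (enum_rank (xchoose (anchors x)))) => x y exy.
rewrite (inj_eq (@cast_ord_inj _ _ _)) (inj_eq enum_rank_inj).
have [a [b [exa exb eab]]] := triangle_full_nbrs tri x.
apply: (anchor_edge_neq e_sym e_irr complete _ anchors exa exb eab exy); last 2 first.
- exact: xchooseP.
- exact: xchooseP.
by rewrite card_Q.
Qed.
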